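(* Let $\beta\ge0.8218$ be a real number, and let $Z>0$ and $N>0$ be real numbers with $N/Z<7/3$. Then $$\beta^{-1}Z+3Z^{1/3}>\min\left\{N,\ Z\,\frac{1+0.68\,N^{-2/3}}{\beta-3(\beta/6)^{1/3}N^{-2/3}}\right\}.$$ *)

From Stdlib Require Import Reals.

(* Writing Z = u^3, N = v^3 and beta = 6 c^3, only the case N >= Z/beta + 3 Z^(1/3) with a
   positive denominator needs work.  Clearing denominators and using that case hypothesis
   to bound 3 c (u^3/beta + 3 u) by 3 c v^3, it suffices that 18 c^3 s^2 - 3 s^3 > 0.68 c^2
   for s = c v / u.  The constraints beta v^3 > u^3 and 3 v^3 < 7 u^3 confine s to an
   interval, and a cubic of the form a s^2 - b s^3 attains its minimum over an interval of
   nonnegative reals at an endpoint, where the bound is checked numerically. *)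
From Stdlib Require Import Reals Lra Psatz.
Open Scope R_scope.

Lemma Rpower_one_third_cube x : 0 < x -> Rpower x (1 / 3) ^ 3 = x.
Proof.
  intro Hx. rewrite <- (Rpower_pow 3) by apply exp_pos.
  rewrite Rpower_mult. replace (1 / 3 * INR 3) with 1 by (simpl; field).
  now apply Rpower_1.
Qed.

Lemma Rpower_neg_two_thirds x : 0 < x -> Rpower x (- (2 / 3)) = / Rpower x (1 / 3) ^ 2.
Proof.
  intro Hx. rewrite Rpower_Ropp. f_equal.
  rewrite <- (Rpower_pow 2) by apply exp_pos.
  rewrite Rpower_mult. f_equal. simpl; field.
Qed.

Lemma pow3_lt_cancel x y : 0 <= y -> x ^ 3 < y ^ 3 -> x < y.
Proof.
  intros Hy Hxy. destruct (Rlt_le_dec x y) as [h | h]; trivial.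
  assert (y ^ 3 <= x ^ 3) by (apply pow_incr; lra). lra.
Qed.

Lemma cubic_min_at_endpoints a b p q s :
  0 <= b -> 0 <= p -> p <= s <= q ->
  Rmin (a * p ^ 2 - b * p ^ 3) (a * q ^ 2 - b * q ^ 3) <= a * s ^ 2 - b * s ^ 3.
Proof.
  intros Hb Hp Hs.
  assert (Ep : a * s ^ 2 - b * s ^ 3 - (a * p ^ 2 - b * p ^ 3)
               = (s - p) * (a * (s + p) - b * (s ^ 2 + s * p + p ^ 2))) by ring.
  assert (Eq : a * s ^ 2 - b * s ^ 3 - (a * q ^ 2 - b * q ^ 3)
               = (q - s) * (b * (s ^ 2 + s * q + q ^ 2) - a * (s + q))) by ring.
  destruct (Rle_lt_dec (b * (s ^ 2 + s * p + p ^ 2)) (a * (s + p))) as [Hl | Hl].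
  - apply Rle_trans with (a * p ^ 2 - b * p ^ 3); [apply Rmin_l | nra].
  - apply Rle_trans with (a * q ^ 2 - b * q ^ 3); [apply Rmin_r |].
    assert (Hq : a * (s + q) <= b * (s ^ 2 + s * q + q ^ 2)).
    { apply Rnot_lt_le. intro Hq.
      (* subtracting the two strict inequalities gives a > b (p + q + s) when p < q *)
      assert (Hdiff : (q - p) * (a - b * (p + q + s)) > 0).
      { replace ((q - p) * (a - b * (p + q + s)))
          with (a * (s + q) - b * (s ^ 2 + s * q + q ^ 2)
                - (a * (s + p) - b * (s ^ 2 + s * p + p ^ 2))) by ring.
        lra. }
      assert (Hpq : p < q).
      { destruct (Rle_lt_or_eq_dec p q) as [h | h]; [lra | trivial |].
        subst q. rewrite Rminus_diag, Rmult_0_l in Hdiff. lra. }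
      assert (a > b * (p + q + s)).
      { apply Rmult_lt_reg_l with (q - p); lra. }
      assert (a * (s + p) >= b * (p + q + s) * (s + p)).
      { apply Rle_ge, Rmult_le_compat_r; lra. }
      assert (b * (q * s + q * p + s * p) >= 0).
      { apply Rle_ge, Rmult_le_pos; [lra |].
        assert (0 <= q * s) by (apply Rmult_le_pos; lra).
        assert (0 <= q * p) by (apply Rmult_le_pos; lra).
        assert (0 <= s * p) by (apply Rmult_le_pos; lra).
        lra. }
      lra. }
    nra.
Qed.

Lemma cubic_gap_lower_endpoint c :
  0.5154 <= c -> 18 * c ^ 3 * 0.5503 ^ 2 - 3 * 0.5503 ^ 3 > 0.68 * c ^ 2.
Proof.
  intro Hc.
  assert (Hc2 : 0.5154 ^ 2 <= c ^ 2) by (apply pow_incr; lra).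
  assert (0.5154 ^ 2 * (18 * 0.5503 ^ 2 * c - 0.68) <= c ^ 2 * (18 * 0.5503 ^ 2 * c - 0.68))
    by (apply Rmult_le_compat_r; lra).
  nra.
Qed.

Lemma cubic_gap_upper_endpoint c :
  0.5154 <= c -> 18 * c ^ 3 * (1.3264 * c) ^ 2 - 3 * (1.3264 * c) ^ 3 > 0.68 * c ^ 2.
Proof.
  intro Hc.
  assert (Hc3 : 0.5154 ^ 3 <= c ^ 3) by (apply pow_incr; lra).
  assert (18 * 1.3264 ^ 2 * c ^ 3 - 3 * 1.3264 ^ 3 * c - 0.68 > 0) by nra.
  assert (0 < c ^ 2) by nra.
  nra.
Qed.

Lemma cubic_gap c s :
  0.5154 <= c -> 0 < s -> 6 * s ^ 3 > 1 -> 3 * s ^ 3 < 7 * c ^ 3 ->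
  18 * c ^ 3 * s ^ 2 - 3 * s ^ 3 > 0.68 * c ^ 2.
Proof.
  intros Hc Hs Hlo Hhi.
  (* 0.5503^3 < 1/6 and 7/3 < 1.3264^3 *)
  assert (Hs_lo : 0.5503 < s) by (apply pow3_lt_cancel; lra).
  assert (Hs_hi : s < 1.3264 * c) by (apply pow3_lt_cancel; nra).
  assert (Hmin := cubic_min_at_endpoints (18 * c ^ 3) 3 0.5503 (1.3264 * c) s
                    ltac:(lra) ltac:(lra) ltac:(lra)).
  assert (H1 := cubic_gap_lower_endpoint c Hc).
  assert (H2 := cubic_gap_upper_endpoint c Hc).
  assert (0.68 * c ^ 2 < Rmin (18 * c ^ 3 * 0.5503 ^ 2 - 3 * 0.5503 ^ 3)
                               (18 * c ^ 3 * (1.3264 * c) ^ 2 - 3 * (1.3264 * c) ^ 3))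
    by (apply Rmin_glb_lt; lra).
  lra.
Qed.

Lemma cleared_gap c u v :
  0.5154 <= c -> 0 < u -> 0 < v -> 6 * c ^ 3 * v ^ 3 > u ^ 3 -> 3 * v ^ 3 < 7 * u ^ 3 ->
  0.68 * u ^ 3 < 18 * c ^ 3 * u * v ^ 2 - 3 * c * v ^ 3.
Proof.
  intros Hc Hu Hv Hlo Hhi.
  assert (Hu3 : 0 < u ^ 3) by (apply pow_lt; lra).
  assert (Hcube : (c * v / u) ^ 3 = c ^ 3 * v ^ 3 / u ^ 3) by (field; lra).
  assert (Hgap := cubic_gap c (c * v / u) Hc).
  assert (0 < c * v / u) by (apply Rdiv_lt_0_compat; nra).
  assert (Hc3 : 0 < c ^ 3) by (apply pow_lt; lra).
  assert (6 * (c * v / u) ^ 3 > 1).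
  { rewrite Hcube. apply Rmult_lt_reg_r with (u ^ 3); trivial.
    replace (6 * (c ^ 3 * v ^ 3 / u ^ 3) * u ^ 3) with (6 * c ^ 3 * v ^ 3) by (field; lra).
    lra. }
  assert (3 * (c * v / u) ^ 3 < 7 * c ^ 3).
  { rewrite Hcube. apply Rmult_lt_reg_r with (u ^ 3); trivial.
    replace (3 * (c ^ 3 * v ^ 3 / u ^ 3) * u ^ 3) with (c ^ 3 * (3 * v ^ 3)) by (field; lra).
    replace (7 * c ^ 3 * u ^ 3) with (c ^ 3 * (7 * u ^ 3)) by ring.
    apply Rmult_lt_compat_l; lra. }
  assert (E : 18 * c ^ 3 * u * v ^ 2 - 3 * c * v ^ 3 - 0.68 * u ^ 3
              = u ^ 3 / c ^ 2 * (18 * c ^ 3 * (c * v / u) ^ 2 - 3 * (c * v / u) ^ 3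
                                 - 0.68 * c ^ 2)) by (field; nra).
  assert (0 < u ^ 3 / c ^ 2) by (apply Rdiv_lt_0_compat; nra).
  nra.
Qed.

Lemma cube_form_bound c u v :
  0.5154 <= c -> 0 < u -> 0 < v -> 3 * v ^ 3 < 7 * u ^ 3 ->
  / (6 * c ^ 3) * u ^ 3 + 3 * u >
  Rmin (v ^ 3) (u ^ 3 * (1 + 0.68 * / v ^ 2) / (6 * c ^ 3 - 3 * c * / v ^ 2)).
Proof.
  intros Hc Hu Hv Hhi.
  set (beta := 6 * c ^ 3).
  assert (Hb : 0 < beta) by (unfold beta; nra).
  assert (Hu3 : 0 < u ^ 3) by (apply pow_lt; lra).
  assert (Hv2 : 0 < v ^ 2) by (apply pow_lt; lra).
  assert (Hlhs : 0 < / beta * u ^ 3) by (apply Rmult_lt_0_compat; [apply Rinv_0_lt_compat |]; lra).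
  destruct (Rlt_le_dec (v ^ 3) (/ beta * u ^ 3 + 3 * u)) as [Hsmall | Hlarge].
  { apply Rle_lt_trans with (v ^ 3); [apply Rmin_l | lra]. }
  apply Rle_lt_trans with (u ^ 3 * (1 + 0.68 * / v ^ 2) / (beta - 3 * c * / v ^ 2));
    [apply Rmin_r |].
  assert (Hnum : 0 < u ^ 3 * (1 + 0.68 * / v ^ 2)).
  { assert (0 < / v ^ 2) by (apply Rinv_0_lt_compat; lra). nra. }
  destruct (Rle_lt_dec (beta - 3 * c * / v ^ 2) 0) as [HD | HD].
  - (* a nonpositive denominator makes the fraction nonpositive (zero if it vanishes) *)
    assert (u ^ 3 * (1 + 0.68 * / v ^ 2) / (beta - 3 * c * / v ^ 2) <= 0).
    { destruct (Req_dec (beta - 3 * c * / v ^ 2) 0) as [E | E].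
      - unfold Rdiv. rewrite E, Rinv_0. lra.
      - assert (/ (beta - 3 * c * / v ^ 2) < 0) by (apply Rinv_lt_0_compat; lra).
        unfold Rdiv. nra. }
    lra.
  - assert (Hlo : beta * v ^ 3 > u ^ 3).
    { assert (beta * (/ beta * u ^ 3) = u ^ 3) by (field; lra). nra. }
    assert (Hgap := cleared_gap c u v Hc Hu Hv ltac:(unfold beta in Hlo; lra) Hhi).
    set (D := beta - 3 * c * / v ^ 2) in *.
    assert (HDv : D * v ^ 2 = beta * v ^ 2 - 3 * c) by (unfold D; field; lra).
    apply Rmult_lt_reg_r with (D * v ^ 2); [apply Rmult_lt_0_compat; lra |].
    assert (E : u ^ 3 * (1 + 0.68 * / v ^ 2) / D * (D * v ^ 2) = u ^ 3 * v ^ 2 + 0.68 * u ^ 3)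
      by (field; lra).
    rewrite E, HDv.
    assert (E' : (/ beta * u ^ 3 + 3 * u) * (beta * v ^ 2 - 3 * c)
                 = u ^ 3 * v ^ 2 + 3 * beta * u * v ^ 2 - 3 * c * (/ beta * u ^ 3 + 3 * u))
      by (field; lra).
    rewrite E'. unfold beta in *. nra.
Qed.

Theorem lemma5 (beta Z N : R)
  (hbeta : 0.8218 <= beta) (hZ : 0 < Z) (hN : 0 < N) (hNZ : N / Z < 7 / 3) :
  / beta * Z + 3 * Rpower Z (1 / 3) >
  Rmin N
    (Z * (1 + 0.68 * Rpower N (- (2 / 3)))
       / (beta - 3 * Rpower (beta / 6) (1 / 3) * Rpower N (- (2 / 3)))).
Proof.
  rewrite (Rpower_neg_two_thirds N hN).
  assert (HZ3 := Rpower_one_third_cube Z hZ).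
  assert (HN3 := Rpower_one_third_cube N hN).
  assert (Hb3 := Rpower_one_third_cube (beta / 6) ltac:(lra)).
  assert (Hu : 0 < Rpower Z (1 / 3)) by apply exp_pos.
  assert (Hv : 0 < Rpower N (1 / 3)) by apply exp_pos.
  assert (Hc : 0 < Rpower (beta / 6) (1 / 3)) by apply exp_pos.
  set (u := Rpower Z (1 / 3)) in *. set (v := Rpower N (1 / 3)) in *.
  set (c := Rpower (beta / 6) (1 / 3)) in *.
  rewrite <- HZ3, <- HN3 in *.
  replace beta with (6 * c ^ 3) by lra.
  apply cube_form_bound; trivial.
  - apply Rnot_lt_le. intro Hlt.
    assert (c ^ 3 <= 0.5154 ^ 3) by (apply pow_incr; lra). lra.
  - assert (Hu3 : 0 < u ^ 3) by (apply pow_lt; lra).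
    apply Rmult_lt_reg_r with (/ u ^ 3); [apply Rinv_0_lt_compat; lra |].
    replace (7 * u ^ 3 * / u ^ 3) with 7 by (field; lra).
    replace (3 * v ^ 3 * / u ^ 3) with (3 * (v ^ 3 / u ^ 3)) by (field; lra).
    lra.
Qed.
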